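(* Let $A\subset\mathcal{N}=\omega^\omega$, let $\mathcal{F}$ be a hereditary family of closed and discrete subsets of $A$, let $\{T_a : a\in A\}$ be an $(A,\mathcal{F})$-Reznichenko family of trees, $\mathcal{T}=\bigcup_{a\in A}T_a$, and let $R[\mathcal{F}]\subset 2^{\mathcal{T}}$ be the associated compact set. Then there exists a determining function (for $R[\mathcal{F}]\subset\mathbb{R}^{\mathcal{T}}$) $f:\mathcal{T}\to wf(A)\times\omega^{(\omega^{<\omega})}$.
   Context: A tree is a partially ordered set $(T,\leq)$ in which for each $t$ the set $\{s: s<t\}$ is well ordered and which has a minimum, the root. An immediate successor of $t$ is a node $s>t$ with no $r$ satisfying $t<r<s$. The $\alpha$-th level consists of the $t$ with $\{s:s<t\}$ of order type $\alpha$; the height is the least $\alpha$ with empty $\alpha$-th level. A segment is a set $S\subset T$ of pairwise comparable elements such that $t\leq r\leq s$ with $t,s\in S$ implies $r\in S$; it is initial if it contains the root. For a set $A$ with $|A|\leq\mathfrak{c}$ and a hereditary family $\mathcal{F}$ of subsets of $A$ (closed under subsets), an $(A,\mathcal{F})$-Reznichenko family of trees is a family $\{T_a:a\in A\}$ of trees such that: (1) each $T_a$ has height $\omega$ and every node has $\mathfrak{c}$ many immediate successors; (2) $T_a\cap A=\{a\}$ and $a$ is the root of $T_a$; (3) for every $t\in\bigcup_a T_a$, $\{a\in A: t\in T_a\}\in\mathcal{F}$; (4) for $a\neq b$ and segments $S\subset T_a$, $S'\subset T_b$, $|S\cap S'|\leq 1$; (5) for every $B\in\mathcal{F}$ and every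 disjoint family $\{S_b:b\in B\}$ with $S_b$ a finite initial segment of $T_b$, there are $\mathfrak{c}$ many $t$ that are simultaneously an immediate successor of $S_b$ in $T_b$ for all $b\in B$. $R[\mathcal{F}]\subset 2^{\mathcal{T}}$ is the family of all segments of all the trees $T_a$ (a compact set). A tree on $\omega$ is a set $T\subset\omega^{<\omega}$ closed under initial segments; $Tr\subset 2^{\omega^{<\omega}}$ is the compact metrizable space of all trees on $\omega$; a branch of $T$ is $a\in\omega^\omega$ with $a|n\in T$ for all $n$; $wf(A)\subset Tr$ is the set of trees on $\omega$ none of whose branches belongs to $A$ (with subspace topology), and $\omega^{(\omega^{<\omega})}$ carries the product topology. For an index set $\Gamma$, a compact $K\subset\mathbb{R}^\Gamma$ and a separable metrizable $D$, $f:\Gamma\to D$ is a determining function if for all $x\in K$, compact $C\subset D$ and $\varepsilon>0$, the set $\{\gamma\in f^{-1}(C): |x_\gamma|>\varepsilon\}$ is finite. *)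

From HB Require Import structures.
From mathcomp Require Import all_boot all_order all_algebra.
From mathcomp Require Import all_classical all_reals all_analysis.
Set Implicit Arguments. Unset Strict Implicit. Unset Printing Implicit Defensive.
Import Order.TTheory GRing.Theory Num.Theory.
Local Open Scope classical_set_scope.
Local Open Scope card_scope.

Definition BaireSpace : Type := {ptws nat -> nat}.

Definition closed_in (A B : set BaireSpace) : Prop := A `&` closure B `<=` B.

Definition discrete_subset (B : set BaireSpace) : Prop :=
  forall b, B b -> exists V : set BaireSpace, [/\ open V, V b & V `&` B `<=` [set b]].

Definition hereditary_closed_discrete (A : set BaireSpace) (F : set (set BaireSpace)) : Prop :=
  [/\ (forall B, F B -> B `<=` A),
      (forall B B', F B -> B' `<=` B -> F B'),
      (forall B, F B -> closed_in A B) &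
      (forall B, F B -> discrete_subset B)].

Section AbstractTrees.
Variable U : Type.
Implicit Types (T S : set U) (le : U -> U -> Prop).

Definition preds T le (t : U) : set U := [set s | T s /\ le s t /\ s <> t].

Definition is_root T le (r : U) : Prop := T r /\ (forall t, T t -> le r t).

Definition is_tree T le : Prop :=
  [/\ (forall t, T t -> le t t),
      (forall s t, T s -> T t -> le s t -> le t s -> s = t),
      (forall r s t, T r -> T s -> T t -> le r s -> le s t -> le r t),
      (forall t, T t ->
         (forall x y, preds T le t x -> preds T le t y -> le x y \/ le y x) /\
         (forall X, X `<=` preds T le t -> X !=set0 ->
            exists m, X m /\ forall x, X x -> le m x)) &
      exists r, is_root T le r].

Definition imm_succ T le (t s : U) : Prop :=
  [/\ T t, T s, le t s, s <> t &
      ~ (exists r, [/\ T r, le t r, r <> t, le r s & r <> s])].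

(* height omega: every level n < omega is nonempty and level omega is empty,
   i.e. all predecessor sets are finite and every finite level is inhabited *)
Definition height_omega T le : Prop :=
  (forall t, T t -> finite_set (preds T le t)) /\
  (forall n : nat, exists t, T t /\ preds T le t #= `I_n).

Definition segment T le S : Prop :=
  [/\ S `<=` T,
      (forall x y, S x -> S y -> le x y \/ le y x) &
      (forall t r s, S t -> S s -> T r -> le t r -> le r s -> S r)].

Definition initial_segment T le S : Prop :=
  segment T le S /\ exists r, is_root T le r /\ S r.

Definition imm_succ_seg T le S (t : U) : Prop :=
  exists m, [/\ S m, (forall x, S x -> le x m) & imm_succ T le m t].

End AbstractTrees.

(* Nodes of all trees live in a common universe U; the points of A (a subset of
   N) are identified with elements of U through the injection [inj].
   Tr a is the underlying set of T_a and le a its order. *)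
Definition union_trees (U : Type) (A : set BaireSpace) (Tr : BaireSpace -> set U) : set U :=
  \bigcup_(a in A) Tr a.

Definition reznichenko_family (U : Type) (inj : BaireSpace -> U) (A : set BaireSpace)
    (F : set (set BaireSpace)) (Tr : BaireSpace -> set U) (le : BaireSpace -> U -> U -> Prop) : Prop :=
  [/\
      (forall a, A a ->
        [/\ is_tree (Tr a) (le a), height_omega (Tr a) (le a) &
            forall t, Tr a t ->
              [set s | imm_succ (Tr a) (le a) t s] #= [set: nat -> bool]]),
      (forall a, A a ->
        Tr a `&` (inj @` A) = [set inj a] /\ is_root (Tr a) (le a) (inj a)),
      (forall t, union_trees A Tr t -> F [set a | A a /\ Tr a t]),
      (forall a b, A a -> A b -> a <> b ->
        forall S S', segment (Tr a) (le a) S -> segment (Tr b) (le b) S' ->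
        forall x y, (S `&` S') x -> (S `&` S') y -> x = y) &
      (forall B, F B -> forall Sf : BaireSpace -> set U,
        (forall b, B b -> initial_segment (Tr b) (le b) (Sf b) /\ finite_set (Sf b)) ->
        (forall b c, B b -> B c -> b <> c -> Sf b `&` Sf c = set0) ->
        [set t | union_trees A Tr t /\
                 forall b, B b -> imm_succ_seg (Tr b) (le b) (Sf b) t]
          #= [set: nat -> bool])].

(* R[F]: all segments of all the trees T_a, as points of R^T (indicators) *)
Definition RF (R : realType) (U : Type) (A : set BaireSpace) (Tr : BaireSpace -> set U)
    (le : BaireSpace -> U -> U -> Prop) : set (U -> R) :=
  [set x | exists a S, [/\ A a, segment (Tr a) (le a) S & x = indic S]].

(* trees on omega: subsets of omega^<omega (coded as points of 2^(omega^<omega))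
   closed under initial segments *)
Definition tree_on (T : seq nat -> bool) : Prop :=
  forall (s : seq nat) (n : nat), T s -> T (take n s).

Definition branch_of (T : seq nat -> bool) (a : nat -> nat) : Prop :=
  forall n, T (mkseq a n).

Definition wf (A : set BaireSpace) : set (seq nat -> bool) :=
  [set T | tree_on T /\ forall a : BaireSpace, branch_of T a -> ~ A a].

Definition Dspace : Type :=
  ({ptws seq nat -> bool} * {ptws seq nat -> nat})%type.

Definition wf_times (A : set BaireSpace) : set Dspace := [set p | wf A p.1].

(* f : T -> D is a determining function for K ⊂ R^T (T given as a subset of U);
   compact subsets of the subspace D are the compact subsets of the ambient
   space contained in D *)
Definition determining (R : realType) (U : Type) (Gam : set U) (K : set (U -> R))
    (D : set Dspace) (f : U -> Dspace) : Prop :=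
  (forall g, Gam g -> D (f g)) /\
  forall x, K x -> forall C : set Dspace, compact C -> C `<=` D ->
    forall eps : R, (0 < eps)%R ->
      finite_set [set g | [/\ Gam g, C (f g) & (eps < `|x g|)%R]].

(* Send a node t to the tree of finite sequences having at least two extensions
   in A_t = {a : t in T_a}, together with the code that reads off the depth of t
   in T_b at every sequence s whose cylinder meets A_t only in b.  The tree has no
   branch in A because A_t is closed and discrete in A.  A compact C inside
   wf(A) x omega^(omega^<omega) is, by compactness, cut off from every a in A at
   a fixed length m, and its second coordinates are bounded at a|m; so a node of
   a segment of T_a whose image lies in C has depth in T_a below that bound, and
   a segment has only finitely many such nodes. *)
From HB Require Import structures.
From mathcomp Require Import all_boot all_order all_algebra.
From mathcomp Require Import all_classical all_reals all_analysis.
From mathcomp Require Import finmap.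
Import Order.TTheory GRing.Theory Num.Theory.
Set Implicit Arguments. Unset Strict Implicit.
Local Open Scope classical_set_scope.

Lemma cylinder_nbhs (a : BaireSpace) (V : set BaireSpace) : nbhs a V ->
  exists n, forall b : BaireSpace, (forall i, (i < n)%N -> b i = a i) -> V b.
Proof.
move=> aV.
set G := filter_from [set: nat]
  (fun n => [set b : BaireSpace | forall i, (i < n)%N -> b i = a i]).
have FG : Filter G.
  apply: filter_from_filter; first by exists 0%N.
  move=> i j _ _; exists (maxn i j) => // b /= Hb.
  by split=> k Hk; apply: Hb; rewrite leq_max Hk ?orbT.
have : G --> (a : BaireSpace).
  apply/(@pointwise_cvgP nat nat G a FG) => t B /= Bt.
  exists t.+1 => // b /= Hb; rewrite Hb //; exact: nbhs_singleton.
by move=> /(_ V aV) [n _ Hn]; exists n => b Hb; apply: Hn.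
Qed.

Lemma compact_nondecreasing_open_cover (X : topologicalType) (C : set X)
    (V : nat -> set X) :
  compact C -> (forall m, open (V m)) ->
  (forall m n x, (m <= n)%N -> C x -> V m x -> V n x) ->
  (forall x, C x -> exists m, V m x) ->
  exists m, C `<=` V m.
Proof.
move=> cC oV mV cov.
have := iffRL (near_covering_withinP C) (iffLR (compact_near_coveringP C) cC).
move=> /(_ nat \oo (fun i x => V i x) _) near_cover.
have [x Cx|N _ HN] := near_cover _; last by exists N; exact: HN N (leqnn N).
have [m Vm] := cov x Cx.
exists (V m, [set i | (m <= i)%N]) => /=.
  by split; [exact: open_nbhs_nbhs | exists m].
by move=> [y i] [Vy mi] Cy; exact: mV mi Cy Vy.
Qed.

Section TreeDepth.
Variables (U : Type) (T : set U) (le : U -> U -> Prop).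

Definition depth (t : U) : nat :=
  (#|` @fset_set {classic U} (preds T le t)|)%fset.

Hypotheses (treeT : is_tree T le)
  (finite_preds : forall t, T t -> finite_set (preds T le t)).

Lemma depth_lt s t : T s -> T t -> le s t -> s <> t -> (depth s < depth t)%N.
Proof.
have [_ anti trans _ _] := treeT.
move=> Ts Tt st nst; have fs := finite_preds Ts; have ft := finite_preds Tt.
have sub : ((s : {classic U}) |` @fset_set {classic U} (preds T le s) `<=`
            @fset_set {classic U} (preds T le t))%fset.
  apply/fsubsetP => x; rewrite !inE => /orP[/eqP ->|].
    by rewrite in_fset_set //; apply/mem_set.
  rewrite !in_fset_set // => /set_mem [Tx [xs nxs]]; apply/mem_set.
  split; [by [] | split; first exact: (trans x s t)].
  by move=> xt; subst x; apply: nst; apply: anti.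
have := fsubset_leq_card sub; rewrite cardfsU1.
suff -> : (s : {classic U}) \notin @fset_set {classic U} (preds T le s) by [].
by rewrite in_fset_set //; apply/negP => /set_mem [_ []].
Qed.

Lemma chain_depth_bounded_finite (S : set U) (j : nat) :
  S `<=` T -> (forall x y, S x -> S y -> le x y \/ le y x) ->
  finite_set [set t | S t /\ (depth t < j)%N].
Proof.
move=> ST chainS; set X := [set t | S t /\ _].
have depth_inj : {in X &, injective depth}.
  move=> s t /set_mem [Ss _] /set_mem [St _] e; case: (pselect (s = t)) => // ne.
  case: (chainS s t Ss St) => l.
    by have := depth_lt (ST _ Ss) (ST _ St) l ne; rewrite e ltnn.
  by have := depth_lt (ST _ St) (ST _ Ss) l (nesym ne); rewrite e ltnn.
rewrite -(eq_finite_set (inj_card_eq depth_inj)).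
by apply: sub_finite_set (finite_II j) => _ [t [_ tj] <-].
Qed.

End TreeDepth.

Definition cylinder (s : seq nat) : set BaireSpace :=
  [set b | forall i, (i < size s)%N -> nth 0%N s i = b i].

Lemma cylinder_mkseq (a b : BaireSpace) n :
  cylinder (mkseq a n) b <-> forall i, (i < n)%N -> b i = a i.
Proof.
rewrite /cylinder size_mkseq; split => H i ilt; first by rewrite -H // nth_mkseq.
by rewrite nth_mkseq // H.
Qed.

Lemma cylinder_take s n b : cylinder s b -> cylinder (take n s) b.
Proof.
by move=> H i; rewrite size_take_min leq_min => /andP[iln ils]; rewrite nth_take // H.
Qed.

Section SplitTreeCode.
Variables (U : Type) (A : set BaireSpace) (Tr : BaireSpace -> set U)
  (le : BaireSpace -> U -> U -> Prop).

Definition roots_through (t : U) : set BaireSpace := [set a | A a /\ Tr a t].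

Definition split_tree (t : U) (s : seq nat) : bool :=
  `[< exists b c, [/\ roots_through t b, roots_through t c, b <> c,
                      cylinder s b & cylinder s c] >].

Lemma split_tree_wf F t :
  hereditary_closed_discrete A F -> F (roots_through t) -> wf A (split_tree t).
Proof.
move=> [_ _ closedF discreteF] Ft; split.
  move=> s n /asboolP [b [c [Ab Ac bc sb sc]]]; apply/asboolP.
  by exists b, c; split => //; exact: cylinder_take.
move=> a branch Aa.
have split_near V : nbhs a V -> exists b c, [/\ roots_through t b,
    roots_through t c, b <> c, V b & V c].
  move=> /cylinder_nbhs [n Vn].
  have /asboolP [b [c [Ab Ac bc sb sc]]] := branch n.
  by exists b, c; split => //; apply: Vn; exact/cylinder_mkseq.
have at_a : roots_through t a.
  apply: (closedF _ Ft); split => // V /split_near [b [_ [Ab _ _ Vb _]]].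
  by exists b.
have [V [oV Va isoV]] := discreteF _ Ft a at_a.
have [b [c [Ab Ac bc Vb Vc]]] := split_near V (open_nbhs_nbhs (conj oV Va)).
have eb : b = a by apply: isoV.
have ec : c = a by apply: isoV.
by apply: bc; rewrite eb ec.
Qed.

Definition depth_code (t : U) (s : seq nat) : nat :=
  match pselect (exists b, roots_through t `&` cylinder s = [set b]) with
  | left h => depth (Tr (sval (cid h))) (le (sval (cid h))) t
  | right _ => 0%N
  end.

Lemma depth_codeE t s a : roots_through t a -> cylinder s a ->
  split_tree t s = false -> depth_code t s = depth (Tr a) (le a) t.
Proof.
move=> ta sa nsplit.
have E : roots_through t `&` cylinder s = [set a].
  apply/seteqP; split => [b [tb sb]|b ->] //=.
  apply/eqP/negPn/negP => /eqP nba; move/negP: nsplit; apply; apply/asboolP.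
  by exists b, a; split.
rewrite /depth_code; case: pselect => [h|]; last by case; exists a.
case: (cid h) => b /= Eb.
have ab : [set b] a by rewrite -Eb E.
by rewrite ab.
Qed.

End SplitTreeCode.

Lemma fst_coord_continuous (s : seq nat) : continuous (fun p : Dspace => p.1 s).
Proof.
move=> p.
apply: (@continuous_comp Dspace {ptws seq nat -> bool} bool fst (fun q => q s) p).
  exact: cvg_fst.
exact: (@proj_continuous _ (fun _ => bool) s).
Qed.

Lemma snd_coord_continuous (s : seq nat) : continuous (fun p : Dspace => p.2 s).
Proof.
move=> p.
apply: (@continuous_comp Dspace {ptws seq nat -> nat} nat snd (fun q => q s) p).
  exact: cvg_snd.
exact: (@proj_continuous _ (fun _ => nat) s).
Qed.

Lemma compact_wf_times_prefix_out (A : set BaireSpace) (C : set Dspace) a :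
  compact C -> C `<=` wf_times A -> A a ->
  exists m, C `<=` [set p | p.1 (mkseq a m) = false].
Proof.
move=> cC CA Aa; apply: compact_nondecreasing_open_cover => //.
- move=> k; exact: (iffLR (continuousP _) (@fst_coord_continuous (mkseq a k))
    [set false] (discrete_open _)).
- move=> k n p kn Cp /= out; apply/negbTE/negP => In.
  have [treep _] := CA p Cp.
  have := treep _ k In.
  by rewrite /mkseq -map_take take_iota (minn_idPl kn) out.
- move=> p Cp; have [_ nobranch] := CA p Cp.
  apply: contrapT => inside; apply: (nobranch a _ Aa) => n.
  by apply/negPn/negP => /negbTE out; apply: inside; exists n.
Qed.

Lemma compact_snd_coord_bounded (C : set Dspace) s :
  compact C -> exists j, C `<=` [set p | (p.2 s < j)%N].
Proof.
move=> cC; apply: compact_nondecreasing_open_cover => //.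
- move=> k; exact: (iffLR (continuousP _) (@snd_coord_continuous s)
    [set i | (i < k)%N] (discrete_open _)).
- by move=> k1 k2 p k12 _ /= h; apply: leq_trans h k12.
- by move=> p _; exists (p.2 s).+1 => /=.
Qed.

Theorem theorem4p1 (R : realType) (U : Type) (inj : BaireSpace -> U) (A : set BaireSpace)
    (F : set (set BaireSpace)) (Tr : BaireSpace -> set U) (le : BaireSpace -> U -> U -> Prop) :
  injective inj ->
  hereditary_closed_discrete A F ->
  reznichenko_family inj A F Tr le ->
  exists f : U -> Dspace,
    determining (union_trees A Tr) (@RF R U A Tr le) (wf_times A) f.
Proof.
move=> _ hcd [trees _ rootsF _ _].
exists (fun t => (split_tree A Tr t : {ptws seq nat -> bool},
                  depth_code A Tr le t : {ptws seq nat -> nat})).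
split=> [t Tt|x [a [S [Aa [ST chainS _] ->]]] C cC CA eps eps0].
  exact: split_tree_wf hcd (rootsF t Tt).
have [treeTa [finite_preds _] _] := trees a Aa.
have [m Cm] := compact_wf_times_prefix_out cC CA Aa.
have [j Cj] := compact_snd_coord_bounded (mkseq a m) cC.
apply: sub_finite_set (chain_depth_bounded_finite treeTa finite_preds j ST chainS).
move=> t [_ Cft large].
have St : S t.
  move: large; rewrite indicE; case: (boolP (t \in S)) => [/set_mem //|_].
  by rewrite normr0 => /(lt_trans eps0); rewrite ltxx.
have t_in_a : roots_through A Tr t a by split => //; apply: ST.
have prefix_a : cylinder (mkseq a m) a by apply/cylinder_mkseq.
split => //; rewrite -(depth_codeE le t_in_a prefix_a (Cm _ Cft)).
exact: Cj _ Cft.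
Qed.
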